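(* Let $\{G^i\}_{i\in I}$ be a finite family of games over the same graph $\Gamma=(V,E)$ such that each $G^i$ has a nonempty set of Nash equilibria, and let $C,D\subseteq V$. Then $\prod_{i\in I}G^i\vDash C\rhd D$ if and only if $G^i\vDash C\rhd D$ for each $i\in I$.
   Context: A game over a finite simple undirected graph $\Gamma=(V,E)$ is a strategic game $(V,\{S_v\}_{v\in V},\{u_v\}_{v\in V})$ with player set $V$, finite strategy sets, and real pay-off functions $u_v$ depending only on the strategies of $v$ and its neighbours. $NE(G)$ is the set of pure Nash equilibria. For profiles $\mathbf s,\mathbf t$ and $X\subseteq V$, $\mathbf s=_X\mathbf t$ means they agree on every player of $X$; $G\vDash C\rhd D$ means for all $\mathbf s,\mathbf t\in NE(G)$, $\mathbf s=_C\mathbf t$ implies $\mathbf s=_D\mathbf t$. If $G^i=(V,\{S^i_v\},\{u^i_v\})$, the product $\prod_{i\in I}G^i$ is the game with player set $V$, strategy sets $S_v=\prod_{i\in I}S^i_v$, and pay-offs $u_v=\sum_{i\in I}u^i_v$ (each $u^i_v$ evaluated at the $i$-th components of the profile). *)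

From HB Require Import structures.
From mathcomp Require Import all_boot all_order all_algebra.
Set Implicit Arguments. Unset Strict Implicit. Unset Printing Implicit Defensive.
Import Order.TTheory GRing.Theory Num.Theory.
Local Open Scope ring_scope.

Record game (V : finType) (adj : rel V) (R : realFieldType) := Game {
  strat : V -> finType;
  payoff : V -> (forall w : V, strat w) -> R;
  payoff_local : forall (v : V) (s t : forall w : V, strat w),
      (forall w : V, (w == v) || adj v w -> s w = t w) ->
      payoff v s = payoff v t
}.

Arguments strat {V adj R}.
Arguments payoff {V adj R}.

Definition profile (V : finType) (adj : rel V) (R : realFieldType)
  (G : game adj R) := forall v : V, strat G v.

Definition is_NE (V : finType) (adj : rel V) (R : realFieldType)
  (G : game adj R) (s : profile G) : Prop :=
  forall (v : V) (x : strat G v), payoff G v (dfwith s x) <= payoff G v s.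

Definition agree_on (V : finType) (T : V -> Type) (X : {set V})
  (s t : forall v : V, T v) : Prop :=
  forall v : V, v \in X -> s v = t v.

Definition entails (V : finType) (adj : rel V) (R : realFieldType)
  (G : game adj R) (C D : {set V}) : Prop :=
  forall s t : profile G, is_NE s -> is_NE t ->
    agree_on C s t -> agree_on D s t.

Section Product.
Variables (V : finType) (adj : rel V) (R : realFieldType) (I : finType)
  (G : I -> game adj R).

Definition prod_strat (v : V) : finType :=
  {dffun forall i : I, strat (G i) v}.

Definition component (s : forall v : V, prod_strat v) (i : I) :
  forall v : V, strat (G i) v := fun v => s v i.

Definition prod_payoff (v : V) (s : forall w : V, prod_strat w) : R :=
  \sum_(i : I) payoff (G i) v (component s i).

Lemma prod_payoff_local (v : V) (s t : forall w : V, prod_strat w) :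
  (forall w : V, (w == v) || adj v w -> s w = t w) ->
  prod_payoff v s = prod_payoff v t.
Proof.
move=> H; apply: eq_bigr => i _; apply: payoff_local => w Hw.
by rewrite /component (H w Hw).
Qed.

Definition prod_game : game adj R :=
  @Game V adj R prod_strat prod_payoff prod_payoff_local.
End Product.

From mathcomp Require Import all_boot all_order all_algebra.
From Stdlib Require Import ClassicalEpsilon.
Set Implicit Arguments. Unset Strict Implicit. Unset Printing Implicit Defensive.
Import Order.TTheory GRing.Theory Num.Theory.
Local Open Scope ring_scope.

(* The pay-off of the product game is the sum of the component pay-offs, and a
   unilateral deviation in the product is a simultaneous unilateral deviation
   of the same player in every component. Hence a product profile is a Nash
   equilibrium iff each of its components is one. Equilibria of the product
   then correspond to families of equilibria of the components: to transfer a
   pair of equilibria of G^i to the product, complete them with one fixed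
   equilibrium of every other component (this is where nonemptiness is used),
   so that they agree wherever G^i's equilibria agree. *)

Section Profiles.
Variables (V : finType) (adj : rel V) (R : realFieldType).

Lemma payoff_ext (G : game adj R) (v : V) (s t : profile G) :
  (forall w, s w = t w) -> payoff G v s = payoff G v t.
Proof. by move=> st; apply: payoff_local => w _. Qed.

Lemma dfwith_ext (G : game adj R) (v : V) (s t : profile G) (x : strat G v) :
  (forall w, s w = t w) -> forall w, dfwith s x w = dfwith t x w.
Proof.
by move=> st w; case: dfwithP => [|w' vw']; rewrite ?dfwith_in ?dfwith_out ?st.
Qed.

Lemma is_NE_ext (G : game adj R) (s t : profile G) :
  (forall w, s w = t w) -> is_NE s -> is_NE t.
Proof.
move=> st NEs v x.
by rewrite -(payoff_ext v st) -(payoff_ext v (dfwith_ext x st)).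
Qed.

End Profiles.

Section ProductGame.
Variables (V : finType) (adj : rel V) (R : realFieldType) (I : finType).
Variable G : I -> game adj R.

Definition prod_profile (f : forall i, profile (G i)) : profile (prod_game G) :=
  fun v => [ffun i => f i v].

Lemma component_prod_profile (f : forall i, profile (G i)) (i : I) :
  forall v, component (prod_profile f) i v = f i v.
Proof. by move=> v; rewrite /component ffunE. Qed.

Lemma component_dfwith (s : profile (prod_game G)) (v : V)
    (x : prod_strat G v) (i : I) :
  forall w, component (dfwith s x) i w = dfwith (component s i) (x i) w.
Proof.
move=> w; rewrite /component.
by case: dfwithP => [|w' vw']; rewrite ?dfwith_in ?dfwith_out.
Qed.

Lemma prod_payoff_dfwith (s : profile (prod_game G)) (v : V)
    (x : prod_strat G v) :
  payoff (prod_game G) v (dfwith s x)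
  = \sum_i payoff (G i) v (dfwith (component s i) (x i)).
Proof. by apply: eq_bigr => i _; apply: payoff_ext; apply: component_dfwith. Qed.

Lemma is_NE_prod (s : profile (prod_game G)) :
  is_NE s <-> forall i, is_NE (component s i).
Proof.
split=> [NEs i v y | NEc v x]; last first.
  by rewrite prod_payoff_dfwith; apply: ler_sum => i _; apply: NEc.
pose x : prod_strat G v := [ffun j => dfwith (fun j => s v j) y j].
have x_off_i j :
    j != i -> forall w, dfwith (component s j) (x j) w = component s j w.
  by move=> ji w; case: dfwithP => //; rewrite ffunE dfwith_out // eq_sym.
have := NEs v x; rewrite prod_payoff_dfwith /= /prod_payoff.
rewrite (bigD1 i) //= [leRHS](bigD1 i) //= ffunE dfwith_in.
rewrite (eq_bigr _ (fun j ji => payoff_ext v (x_off_i j ji))).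
by rewrite lerD2r.
Qed.

Lemma is_NE_prod_profile (f : forall i, profile (G i)) :
  (forall i, is_NE (f i)) -> is_NE (prod_profile f).
Proof.
move=> NEf; apply/is_NE_prod => i.
by apply: is_NE_ext (NEf i) => v; rewrite component_prod_profile.
Qed.

Lemma agree_on_component (X : {set V}) (s t : profile (prod_game G)) :
  agree_on X s t <-> forall i, agree_on X (component s i) (component t i).
Proof.
split=> [st i v Xv | st v Xv]; first by rewrite /component st.
by apply/ffunP => i; apply: st.
Qed.

End ProductGame.

Theorem lemma19 (V : finType) (adj : rel V)
  (adj_sym : symmetric adj) (adj_irr : irreflexive adj)
  (R : realFieldType) (I : finType) (G : I -> game adj R)
  (C D : {set V}) :
  (forall i : I, exists s : profile (G i), is_NE s) ->
  (entails (prod_game G) C D <-> forall i : I, entails (G i) C D).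
Proof.
move=> NE_exists; split=> [prodCD i s t NEs NEt st | CD s t NEs NEt st]; last first.
  move/is_NE_prod: NEs => NEs; move/is_NE_prod: NEt => NEt.
  move/agree_on_component: st => st.
  by apply/agree_on_component => i; apply: CD.
pose e j := proj1_sig (constructive_indefinite_description _ (NE_exists j)).
have NEe j : is_NE (e j) := proj2_sig (constructive_indefinite_description _ _).
have NE_dfwith (u : profile (G i)) : is_NE u -> is_NE (prod_profile (dfwith e u)).
  by move=> NEu; apply: is_NE_prod_profile => j; case: dfwithP.
have agree_dfwith X (u u' : profile (G i)) : agree_on X u u' ->
    agree_on X (prod_profile (dfwith e u)) (prod_profile (dfwith e u')).
  move=> uu'; apply/agree_on_component => j w Xw.
  rewrite !component_prod_profile.
  by case: (eqVneq i j) => [<-|ij]; rewrite ?dfwith_in ?dfwith_out ?uu'.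
move=> v Dv.
have /agree_on_component/(_ i v Dv) :=
  prodCD _ _ (NE_dfwith _ NEs) (NE_dfwith _ NEt) (agree_dfwith _ _ _ st).
by rewrite !component_prod_profile !dfwith_in.
Qed.
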